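(* If $G$ is a finite group, then the group $\mathrm{Gr}(\mathrm{Pq}(G))$ is finite.
   Context: For a group $G$, $\mathrm{Pq}(G)$ is the power quandle on the underlying set of $G$ with $a\rhd b=aba^{-1}$, $\pi^n(a)=a^n$ ($n\in\mathbb{Z}$), and unit the identity $e$. $\mathrm{Gr}(\mathrm{Pq}(G))$ is the group with generators $\sigma(a)$, $a\in G$, and relations $\sigma(aba^{-1})=\sigma(a)\sigma(b)\sigma(a)^{-1}$, $\sigma(a^n)=\sigma(a)^n$, $\sigma(e)=1$ for all $a,b\in G$, $n\in\mathbb{Z}$. *)

From mathcomp Require Import all_boot all_fingroup.
Set Implicit Arguments. Unset Strict Implicit. Unset Printing Implicit Defensive.

Local Open Scope group_scope.

(* The group Gr(Pq(G)) is presented by generators sigma(a), a in G, and the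
   relations of the paper.  We model it as words in the letters
   sigma(a)^{+1} = (a, true) and sigma(a)^{-1} = (a, false), modulo the
   smallest congruence containing free cancellation and the relations. *)
Definition gr_word (gT : finGroupType) := seq (gT * bool).

Definition gr_flip (gT : finGroupType) (x : gT * bool) : gT * bool := (x.1, ~~ x.2).

Definition gr_pos (gT : finGroupType) (a : gT) (n : nat) : gr_word gT := nseq n (a, true).
Definition gr_neg (gT : finGroupType) (a : gT) (n : nat) : gr_word gT := nseq n (a, false).

Inductive gr_equiv (gT : finGroupType) : gr_word gT -> gr_word gT -> Prop :=
  | gr_refl w : gr_equiv w w
  | gr_sym u v : gr_equiv u v -> gr_equiv v u
  | gr_trans u v w : gr_equiv u v -> gr_equiv v w -> gr_equiv u w
  | gr_cat u u' v v' : gr_equiv u u' -> gr_equiv v v' -> gr_equiv (u ++ v) (u' ++ v')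
  | gr_free x : gr_equiv [:: x; gr_flip x] [::]
  | gr_conj (a b : gT) : gr_equiv [:: (a * b * a^-1, true)] [:: (a, true); (b, true); (a, false)]
  | gr_pow_pos (a : gT) (n : nat) : gr_equiv [:: (a ^+ n, true)] (gr_pos a n)
  | gr_pow_neg (a : gT) (n : nat) : gr_equiv [:: ((a ^+ n)^-1, true)] (gr_neg a n)
  | gr_unit : gr_equiv [:: (1, true)] [::].

Definition GrPq_finite (gT : finGroupType) : Prop :=
  exists s : seq (gr_word gT), forall w : gr_word gT, exists2 w', w' \in s & gr_equiv w w'.

From mathcomp Require Import all_boot all_fingroup.

(* Since sigma(a)^-1 = sigma(a^-1), every word is equivalent to a positive word.
   In a positive word a letter sigma(c) can be pushed to the right end at the
   cost of conjugating the letters it passes by c, because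
   sigma(c) sigma(b) = sigma(c b c^-1) sigma(c).  So whenever sigma(c) occurs
   at least #[c] times, those occurrences can be gathered and #[c] of them
   cancelled, as sigma(c)^#[c] = sigma(c^#[c]) = sigma(1) = 1.  Hence every
   word is equivalent to one of bounded length, and there are finitely many
   of those. *)

Set Implicit Arguments. Unset Strict Implicit. Unset Printing Implicit Defensive.
Local Open Scope group_scope.

Lemma size_eq_sum_count_mem (T : finType) (s : seq T) :
  size s = (\sum_(x : T) count_mem x s)%N.
Proof.
elim: s => [|y s IHs] /=; first by rewrite big1.
rewrite big_split /= -IHs (bigD1 y) //= eqxx big1 ?addn0 //.
by move=> x /negbTE; rewrite eq_sym => ->.
Qed.

Lemma exists_count_mem_gt (T : finType) (s : seq T) k :
  (#|T| * k < size s)%N -> exists x, (k < count_mem x s)%N.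
Proof.
move=> lt_s; apply/existsP; apply: contraLR lt_s => /existsPn le_count.
rewrite -leqNgt size_eq_sum_count_mem -sum_nat_const.
by apply: leq_sum => x _; rewrite leqNgt le_count.
Qed.

Definition words_upto (T : finType) (n : nat) : seq (seq T) :=
  flatten [seq [seq val t | t <- enum {: m.-tuple T}] | m <- iota 0 n.+1].

Lemma mem_words_upto (T : finType) n (w : seq T) :
  (size w <= n)%N -> w \in words_upto T n.
Proof.
move=> le_wn; apply/flattenP; exists [seq val t | t <- enum {: (size w).-tuple T}].
  by apply/mapP; exists (size w); rewrite // mem_iota add0n ltnS.
by apply/mapP; exists (in_tuple w); rewrite ?mem_enum.
Qed.

Section GrPq.
Variable gT : finGroupType.
Implicit Types (u v w : gr_word gT) (b c : gT).

Lemma gr_equiv_catl u v v' : gr_equiv v v' -> gr_equiv (u ++ v) (u ++ v').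
Proof. exact/gr_cat/gr_refl. Qed.

Lemma gr_equiv_catr u u' v : gr_equiv u u' -> gr_equiv (u ++ v) (u' ++ v).
Proof. by move=> Eu; apply: gr_cat Eu (gr_refl v). Qed.

Definition gr_positive w := all snd w.

Definition gr_conjw c w : gr_word gT := [seq (c * x.1 * c^-1, x.2) | x <- w].

Definition gr_posw w : gr_word gT :=
  [seq if x.2 then x else (x.1^-1, true) | x <- w].

Lemma gr_posw_positive w : gr_positive (gr_posw w).
Proof. by elim: w => [|[a []] w IHw]. Qed.

Lemma gr_equiv_posw w : gr_equiv w (gr_posw w).
Proof.
elim: w => [|[a t] w IHw]; first exact: gr_refl.
suff Ea : gr_equiv [:: (a, t)] [:: if t then (a, t) else (a^-1, true)].
  exact: gr_cat Ea IHw.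
case: t; first exact: gr_refl.
by apply: gr_sym; have := gr_pow_neg a 1; rewrite expg1.
Qed.

Lemma gr_letter_commute c b :
  gr_equiv [:: (c, true); (b, true)] [:: (c * b * c^-1, true); (c, true)].
Proof.
have cancel_cV : gr_equiv [:: (c, false); (c, true)] [::] := gr_free (c, false).
apply: (@gr_trans _ _ ([:: (c, true); (b, true)] ++ [:: (c, false); (c, true)])).
  by apply: gr_sym; rewrite -[X in gr_equiv _ X]cats0; apply: gr_equiv_catl.
exact/gr_sym/(gr_equiv_catr [:: (c, true)] (gr_conj c b)).
Qed.

Lemma gr_letter_shift c v : gr_positive v ->
  gr_equiv ((c, true) :: v) (gr_conjw c v ++ [:: (c, true)]).
Proof.
elim: v => [|[b []] v IHv] //= pos_v; first exact: gr_refl.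
apply: (@gr_trans _ _ ([:: (c * b * c^-1, true); (c, true)] ++ v)).
  exact: (@gr_equiv_catr [:: _; _]) (gr_letter_commute c b).
exact: (@gr_equiv_catl [:: _]) (IHv pos_v).
Qed.

Lemma gr_gather c u : gr_positive u -> exists2 u', gr_positive u' &
  (size u' + count_mem (c, true) u = size u)%N /\
  gr_equiv u (u' ++ nseq (count_mem (c, true) u) (c, true)).
Proof.
elim: u => [|x u IHu] /=; first by exists [::]; split=> //; apply: gr_refl.
case/andP=> pos_x /IHu[u' pos_u' [size_u' E]].
have Exu := gr_equiv_catl [:: x] E.
case: (eqVneq x (c, true)) Exu => [-> | neq_x] Exu /=; last first.
  by exists (x :: u'); [rewrite /= pos_x | rewrite /= -size_u' addSn].
exists (gr_conjw c u'); first by rewrite /gr_positive all_map.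
split; first by rewrite size_map addnS size_u'.
apply: gr_trans Exu _; rewrite add0n -(cat1s _ (nseq _ _)) !catA.
exact: gr_equiv_catr (gr_letter_shift c pos_u').
Qed.

Lemma gr_order_cancel c : gr_equiv (nseq #[c] (c, true)) [::].
Proof.
apply: (@gr_trans _ _ [:: (c ^+ #[c], true)]); first exact/gr_sym/gr_pow_pos.
by rewrite expg_order; apply: gr_unit.
Qed.

Lemma gr_shorten c w : gr_positive w -> (#[c] <= count_mem (c, true) w)%N ->
  exists2 w', gr_positive w' & (size w' < size w)%N /\ gr_equiv w w'.
Proof.
move=> pos_w; have [u' pos_u' [size_u' E]] := gr_gather c pos_w.
set k := count_mem _ w in size_u' E * => le_ck.
exists (u' ++ nseq (k - #[c]) (c, true)).
  by rewrite /gr_positive all_cat all_nseq orbT andbT.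
split.
  rewrite size_cat size_nseq -size_u' ltn_add2l ltn_subrL order_gt0.
  exact: leq_trans (order_gt0 c) le_ck.
apply: gr_trans E _; rewrite -{1}(subnK le_ck) nseqD catA -[X in gr_equiv _ X]cats0.
exact/gr_equiv_catl/gr_order_cancel.
Qed.

Definition gr_length_bound := (#|{: gT * bool}| * #|gT|)%N.

Lemma gr_positive_reduce w : gr_positive w ->
  exists2 w', (size w' <= gr_length_bound)%N & gr_equiv w w'.
Proof.
elim: {w}_.+1 {-2}w (ltnSn (size w)) => // n IHn w lt_wn pos_w.
case: (leqP (size w) gr_length_bound) => [le_w | /exists_count_mem_gt[[c t] lt_count]].
  by exists w; last apply: gr_refl.
case: t lt_count => lt_count; last first.
  have no_neg : count_mem (c, false) w = 0%N.
    by apply/count_memPn; apply/negP => /(allP pos_w).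
  by rewrite no_neg in lt_count.
have le_ck := ltnW (leq_ltn_trans (max_card (mem <[c]>)) lt_count).
have [w' pos_w' [lt_w' E]] := gr_shorten pos_w le_ck.
have [w'' le_w'' E'] := IHn w' (leq_trans lt_w' lt_wn) pos_w'.
by exists w''; last exact: gr_trans E E'.
Qed.

End GrPq.

Theorem mainTheorem12 (gT : finGroupType) : GrPq_finite gT.
Proof.
exists (words_upto _ (gr_length_bound gT)) => w.
have [w' le_w' E] := gr_positive_reduce (gr_posw_positive w).
exists w'; first exact: mem_words_upto.
exact: gr_trans (gr_equiv_posw w) E.
Qed.
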